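(* Let $\phi_1,\dots,\phi_{n+m}$ be arbitrary functions of one variable and $\bar\beta=\{\beta_1,\dots,\beta_{n+m}\}$. Define $\Phi_{n+m}(\bar\beta)=\Delta_{n+m}(\bar\beta)\det_{n+m}\big[\phi_k(\beta_j)\big]_{j,k=1}^{n+m}$. Then $$\Phi_{n+m}(\bar\beta)=\sum \Delta_n(\bar\beta_{\rm I})\det_{k=1,\dots,n}\phi_k(\beta_{{\rm I}_j})\cdot\Delta_m(\bar\beta_{\rm II})\det_{k=1,\dots,m}\phi_{n+k}(\beta_{{\rm II}_j})\cdot g(\bar\beta_{\rm II},\bar\beta_{\rm I}),$$ where the sum runs over partitions $\bar\beta\Rightarrow\{\bar\beta_{\rm I},\bar\beta_{\rm II}\}$ with $\#\bar\beta_{\rm I}=n$, $\#\bar\beta_{\rm II}=m$, the elements of each subset being listed in increasing order of their original indices ($\beta_{{\rm I}_1},\beta_{{\rm I}_2},\dots$ and $\beta_{{\rm II}_1},\dots$).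
   Context: Fix $c\neq0$ and $g(u,v)=\frac{c}{u-v}$. For sets, $g(\bar u,\bar v)=\prod_{u_j\in\bar u}\prod_{v_k\in\bar v}g(u_j,v_k)$. For an ordered set $\bar v=\{v_1,\dots,v_p\}$, $\Delta_p(\bar v)=\prod_{j>k}g(v_j,v_k)$ (with $\Delta_0=1$). *)

From HB Require Import structures.
From mathcomp Require Import all_boot all_order all_algebra.
Set Implicit Arguments. Unset Strict Implicit. Unset Printing Implicit Defensive.
Import GRing.Theory.
Local Open Scope ring_scope.

Definition gfun {R : fieldType} (c u v : R) : R := c / (u - v).

Definition gset {R : fieldType} (c : R) (s t : seq R) : R :=
  \prod_(u <- s) \prod_(v <- t) gfun c u v.

Definition Delta {R : fieldType} (c : R) (s : seq R) : R :=
  \prod_(j < size s) \prod_(k < size s | (k < j)%N) gfun c (nth 0 s j) (nth 0 s k).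

From mathcomp Require Import all_boot all_algebra all_fingroup.
From mathcomp Require Import ring.
Set Implicit Arguments. Unset Strict Implicit. Unset Printing Implicit Defensive.
Import GRing.Theory.
Local Open Scope ring_scope.

(* Up to the constant [c ^ 'C(p, 2)], [Delta_p] is the inverse of a Vandermonde
   determinant, so it is alternating and [Delta(beta) * det [phi_k (beta_j)]]
   expands as [sum_s Delta(beta o s) * prod_k phi_k (beta (s k))]. Grouping the
   permutations [s] by [I = s {0, .., n-1}], each [s] is uniquely a pair of
   permutations of [I] and of its complement, and [Delta_(n+m)] splits into the
   two smaller [Delta]s times the cross factor [g(beta_II, beta_I)], so each
   group resums to the term of [I] on the right. The identity is purely
   algebraic: with [x / 0 = 0] it holds without [c != 0] or injectivity of
   [beta]. *)

Lemma nth_map_enum_ord (T : Type) (x0 : T) p (a : 'I_p -> T) (j : 'I_p) :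
  nth x0 [seq a i | i <- enum 'I_p] j = a j.
Proof. by rewrite (nth_map j) ?size_enum_ord ?nth_ord_enum. Qed.

Section IndexedDelta.

Variables (R : fieldType) (c : R).

Definition deltaf p (a : 'I_p -> R) : R :=
  \prod_(j < p) \prod_(k < p | (k < j)%N) gfun c (a j) (a k).

Definition gprod m n (z : 'I_m -> R) (y : 'I_n -> R) : R :=
  \prod_(k < m) \prod_(j < n) gfun c (z k) (y j).

Lemma eq_deltaf p (a b : 'I_p -> R) : a =1 b -> deltaf a = deltaf b.
Proof. by move=> eq_ab; apply: eq_bigr => j _; apply: eq_bigr => k _; rewrite !eq_ab. Qed.

Lemma eq_gprod m n (z z' : 'I_m -> R) (y y' : 'I_n -> R) :
  z =1 z' -> y =1 y' -> gprod z y = gprod z' y'.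
Proof.
by move=> eq_z eq_y; apply: eq_bigr => k _; apply: eq_bigr => j _; rewrite eq_z eq_y.
Qed.

Lemma deltaf_Vandermonde p (a : 'I_p -> R) :
  deltaf a = (\prod_(i < p) \prod_(j < p | (i < j)%N) c) /
             \det (Vandermonde p (\row_i a i)).
Proof.
rewrite det_Vandermonde /deltaf (exchange_big_dep predT) //= -prodfV -big_split.
apply: eq_bigr => k _; rewrite -prodfV -big_split; apply: eq_bigr => j _.
by rewrite !mxE.
Qed.

Lemma deltaf_perm p (a : 'I_p -> R) (s : 'S_p) :
  deltaf (a \o s) = (-1) ^+ s * deltaf a.
Proof.
rewrite !deltaf_Vandermonde.
have -> : Vandermonde p (\row_i (a \o s) i) = col_perm s (Vandermonde p (\row_i a i)).
  by apply/matrixP => i j; rewrite !mxE.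
rewrite col_permE det_mulmx det_perm odd_permV.
by rewrite invfM invr_sign mulrA mulrC.
Qed.

Lemma deltaf_mul_det p (a : 'I_p -> R) (psi : 'I_p -> R -> R) :
  deltaf a * \det (\matrix_(j < p, k < p) psi k (a j)) =
  \sum_(s : 'S_p) deltaf (a \o s) * \prod_(k < p) psi k (a (s k)).
Proof.
rewrite /determinant big_distrr [RHS](reindex_inj invg_inj).
apply: eq_bigr => s _; rewrite /= deltaf_perm odd_permV mulrA (mulrC (deltaf a)).
congr (_ * _); rewrite (reindex_perm s^-1%g); apply: eq_bigr => k _.
by rewrite mxE permKV.
Qed.

Lemma deltaf_split n m (b : 'I_(n + m) -> R) :
  deltaf b = deltaf (fun j => b (lshift m j)) * deltaf (fun k => b (rshift n k)) *
             gprod (fun k => b (rshift n k)) (fun j => b (lshift m j)).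
Proof.
rewrite /deltaf /gprod big_split_ord -mulrA [in RHS]mulrC -big_split /= [LHS]mulrC.
congr (_ * _); apply: eq_bigr => j _; rewrite big_split_ord /=.
- rewrite mulrC; congr (_ * _); apply: eq_bigl => k.
    by rewrite ltn_add2l.
  by rewrite (leq_trans (ltn_ord k)) ?leq_addr.
- rewrite [X in _ * X]big1 ?mulr1 // => k.
  by rewrite ltnNge (leq_trans (ltnW (ltn_ord j))) ?leq_addr.
Qed.

Lemma gprod_perm m n (z : 'I_m -> R) (y : 'I_n -> R) (s : 'S_m) (t : 'S_n) :
  gprod (z \o s) (y \o t) = gprod z y.
Proof.
rewrite /gprod (reindex_perm s^-1%g); apply: eq_bigr => k _.
by rewrite (reindex_perm t^-1%g); apply: eq_bigr => j _; rewrite /= !permKV.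
Qed.

Lemma Delta_map_enum p (a : 'I_p -> R) :
  Delta c [seq a i | i <- enum 'I_p] = deltaf a.
Proof.
rewrite /Delta size_map size_enum_ord.
by apply: eq_bigr => j _; apply: eq_bigr => k _; rewrite !nth_map_enum_ord.
Qed.

Lemma Delta_mul_det_map_enum p (a : 'I_p -> R) (psi : 'I_p -> R -> R) :
  Delta c [seq a i | i <- enum 'I_p] *
    \det (\matrix_(j < p, k < p) psi k (nth 0 [seq a i | i <- enum 'I_p] j)) =
  \sum_(s : 'S_p) deltaf (a \o s) * \prod_(k < p) psi k (a (s k)).
Proof.
rewrite Delta_map_enum -deltaf_mul_det; congr (_ * \det _).
by apply/matrixP => j k; rewrite !mxE nth_map_enum_ord.
Qed.

Lemma gset_map_enum m n (z : 'I_m -> R) (y : 'I_n -> R) :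
  gset c [seq z i | i <- enum 'I_m] [seq y i | i <- enum 'I_n] = gprod z y.
Proof.
rewrite /gset /gprod big_map big_enum; apply: eq_bigr => k _.
by rewrite big_map big_enum.
Qed.

End IndexedDelta.

Lemma enum_val_map (T : finType) (A : {pred T}) :
  enum A = [seq enum_val i | i <- enum 'I_#|A|].
Proof.
case: (pickP A) => [x0 _ | A0].
  apply: (@eq_from_nth _ x0) => [|i]; first by rewrite size_map size_enum_ord cardE.
  rewrite -cardE => lt_i; rewrite (nth_map (Ordinal lt_i)) ?size_enum_ord //.
  by rewrite (enum_val_nth x0) nth_enum_ord.
rewrite (eq_enum A0) enum0; apply/esym/nilP.
by rewrite /nilp size_map size_enum_ord eq_card0.
Qed.

Section SetEnumeration.

Variables (N p : nat) (I : {set 'I_N}) (card_I : #|I| = p).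

Definition enum_set_val (j : 'I_p) : 'I_N := enum_val (cast_ord (esym card_I) j).

Lemma enum_set_valP j : enum_set_val j \in I.
Proof. exact: enum_valP. Qed.

Lemma enum_set_val_inj : injective enum_set_val.
Proof. by move=> j j' /enum_val_inj /cast_ord_inj. Qed.

Lemma enum_setE : enum I = [seq enum_set_val j | j <- enum 'I_p].
Proof.
rewrite /enum_set_val; case: p / card_I; rewrite enum_val_map.
by apply: eq_map => j; rewrite cast_ord_id.
Qed.

Lemma map_enum_set (T : Type) (f : 'I_N -> T) :
  [seq f i | i <- enum I] = [seq f (enum_set_val j) | j <- enum 'I_p].
Proof. by rewrite enum_setE -map_comp. Qed.

Lemma enum_set_valK_in x (x_in_I : x \in I) :
  enum_set_val (cast_ord card_I (enum_rank_in x_in_I x)) = x.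
Proof. by rewrite /enum_set_val cast_ordK enum_rankK_in. Qed.

End SetEnumeration.

Definition lblock_image n m (s : 'S_(n + m)) : {set 'I_(n + m)} :=
  [set s (lshift m j) | j : 'I_n].

Lemma card_lblock_image n m (s : 'S_(n + m)) : #|lblock_image s| = n.
Proof. by rewrite card_imset ?card_ord // => j j' /perm_inj /lshift_inj. Qed.

Section MergePermutations.

Variables (n m : nat) (I : {set 'I_(n + m)}).
Hypotheses (card_I : #|I| = n) (card_CI : #|~: I| = m).

Definition merge_fun (t : 'S_n) (u : 'S_m) (i : 'I_(n + m)) : 'I_(n + m) :=
  match split i with
  | inl j => enum_set_val card_I (t j)
  | inr k => enum_set_val card_CI (u k)
  end.

Lemma merge_fun_inj t u : injective (merge_fun t u).
Proof.
have notC j k : enum_set_val card_I j != enum_set_val card_CI k.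
  by apply: contraTneq (enum_set_valP card_CI k) => <-; rewrite inE negbK enum_set_valP.
move=> i i'; rewrite /merge_fun.
case: split_ordP => j ->; case: split_ordP => j' -> E.
- by rewrite (perm_inj (enum_set_val_inj E)).
- by move: (notC (t j) (u j')); rewrite E eqxx.
- by move: (notC (t j') (u j)); rewrite E eqxx.
- by rewrite (perm_inj (enum_set_val_inj E)).
Qed.

Definition merge_perm t u : 'S_(n + m) := perm (@merge_fun_inj t u).

Lemma merge_perm_lshift t u j : merge_perm t u (lshift m j) = enum_set_val card_I (t j).
Proof. by rewrite permE /merge_fun (unsplitK (inl _ j)). Qed.

Lemma merge_perm_rshift t u k : merge_perm t u (rshift n k) = enum_set_val card_CI (u k).
Proof. by rewrite permE /merge_fun (unsplitK (inr _ k)). Qed.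

Lemma merge_perm_inj : injective (fun tu : 'S_n * 'S_m => merge_perm tu.1 tu.2).
Proof.
move=> [t u] [t' u'] /= E; congr (_, _); apply/permP => j.
  apply: (enum_set_val_inj (card_I := card_I)).
  by rewrite -(merge_perm_lshift t u) -(merge_perm_lshift t' u') E.
apply: (enum_set_val_inj (card_I := card_CI)).
by rewrite -(merge_perm_rshift t u) -(merge_perm_rshift t' u') E.
Qed.

Lemma lblock_image_merge_perm t u : lblock_image (merge_perm t u) = I.
Proof.
apply/eqP; rewrite eqEcard card_lblock_image card_I leqnn andbT.
by apply/subsetP => _ /imsetP[j _ ->]; rewrite merge_perm_lshift enum_set_valP.
Qed.

Lemma lblock_imageP s :
  lblock_image s = I -> exists tu : 'S_n * 'S_m, s = merge_perm tu.1 tu.2.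
Proof.
move=> s_I.
have inI j : s (lshift m j) \in I by rewrite -s_I imset_f.
have inCI k : s (rshift n k) \in ~: I.
  by rewrite -s_I inE; apply/imsetP => -[j _ /perm_inj/eqP]; rewrite eq_rlshift.
pose t j := cast_ord card_I (enum_rank_in (inI j) (s (lshift m j))).
pose u k := cast_ord card_CI (enum_rank_in (inCI k) (s (rshift n k))).
have tE j : enum_set_val card_I (t j) = s (lshift m j) by apply: enum_set_valK_in.
have uE k : enum_set_val card_CI (u k) = s (rshift n k) by apply: enum_set_valK_in.
have t_inj : injective t.
  by move=> j j' /(congr1 (enum_set_val card_I)); rewrite !tE => /perm_inj/lshift_inj.
have u_inj : injective u.
  by move=> k k' /(congr1 (enum_set_val card_CI)); rewrite !uE => /perm_inj/rshift_inj.
exists (perm t_inj, perm u_inj); apply/permP => i /=.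
case: (split_ordP i) => [j|k] ->.
  by rewrite merge_perm_lshift permE tE.
by rewrite merge_perm_rshift permE uE.
Qed.

Lemma sum_lblock_image (V : nmodType) (F : 'S_(n + m) -> V) :
  \sum_(s | lblock_image s == I) F s = \sum_(t : 'S_n) \sum_(u : 'S_m) F (merge_perm t u).
Proof.
rewrite pair_big /= -(big_imset _ (in2W merge_perm_inj)) /=.
apply: eq_bigl => s; apply/eqP/imsetP => [/lblock_imageP[tu ->] | [tu _ ->]].
  by exists tu.
exact: lblock_image_merge_perm.
Qed.

End MergePermutations.

Section BlockExpansion.

Variables (R : fieldType) (c : R) (n m : nat).
Variables (phi : 'I_(n + m) -> R -> R) (beta : 'I_(n + m) -> R).

Definition block_term (y : 'I_n -> R) (z : 'I_m -> R) : R :=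
  deltaf c y * deltaf c z * gprod c z y *
  \prod_(k < n) phi (lshift m k) (y k) * \prod_(k < m) phi (rshift n k) (z k).

Lemma eq_block_term y y' z z' : y =1 y' -> z =1 z' -> block_term y z = block_term y' z'.
Proof.
move=> eq_y eq_z; rewrite /block_term (eq_deltaf _ eq_y) (eq_deltaf _ eq_z).
rewrite (eq_gprod _ eq_z eq_y); congr (_ * _ * _).
  by apply: eq_bigr => k _; rewrite eq_y.
by apply: eq_bigr => k _; rewrite eq_z.
Qed.

Lemma perm_term_split (s : 'S_(n + m)) :
  deltaf c (beta \o s) * \prod_(k < n + m) phi k (beta (s k)) =
  block_term (fun j => beta (s (lshift m j))) (fun k => beta (s (rshift n k))).
Proof. by rewrite deltaf_split big_split_ord /block_term !mulrA. Qed.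

Lemma set_term_expand (I : {set 'I_(n + m)}) (card_I : #|I| = n) (card_CI : #|~: I| = m) :
  Delta c [seq beta i | i <- enum I] *
     \det (\matrix_(j < n, k < n) phi (lshift m k) (nth 0 [seq beta i | i <- enum I] j)) *
  (Delta c [seq beta i | i <- enum (~: I)] *
     \det (\matrix_(j < m, k < m) phi (rshift n k) (nth 0 [seq beta i | i <- enum (~: I)] j))) *
  gset c [seq beta i | i <- enum (~: I)] [seq beta i | i <- enum I]
  = \sum_(s | lblock_image s == I)
      block_term (fun j => beta (s (lshift m j))) (fun k => beta (s (rshift n k))).
Proof.
rewrite (map_enum_set card_I beta) (map_enum_set card_CI beta).
pose y j := beta (enum_set_val card_I j); pose z k := beta (enum_set_val card_CI k).
rewrite (Delta_mul_det_map_enum c y (fun k => phi (lshift m k))).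
rewrite (Delta_mul_det_map_enum c z (fun k => phi (rshift n k))).
rewrite (gset_map_enum c z y) sum_lblock_image !big_distrl.
apply: eq_bigr => t _; rewrite /= big_distrr big_distrl; apply: eq_bigr => u _.
rewrite (@eq_block_term _ (y \o t) _ (z \o u)) => [|j|k] /=;
  rewrite ?merge_perm_lshift ?merge_perm_rshift //.
by rewrite /block_term gprod_perm; ring.
Qed.

End BlockExpansion.

Theorem lemmaC2 (R : fieldType) (c : R) (hc : c != 0) (n m : nat)
  (phi : 'I_(n + m) -> R -> R) (beta : 'I_(n + m) -> R)
  (hbeta : injective beta) :
  Delta c [seq beta i | i <- enum 'I_(n + m)] *
    \det (\matrix_(j < n + m, k < n + m) phi k (beta j))
  = \sum_(I : {set 'I_(n + m)} | #|I| == n)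
      (Delta c [seq beta i | i <- enum I] *
         \det (\matrix_(j < n, k < n)
                 phi (lshift m k) (nth 0 [seq beta i | i <- enum I] j)) *
       (Delta c [seq beta i | i <- enum (~: I)] *
         \det (\matrix_(j < m, k < m)
                 phi (rshift n k) (nth 0 [seq beta i | i <- enum (~: I)] j))) *
       gset c [seq beta i | i <- enum (~: I)] [seq beta i | i <- enum I]).
Proof.
rewrite Delta_map_enum deltaf_mul_det.
under eq_bigr do rewrite perm_term_split.
rewrite (partition_big (@lblock_image n m) (fun I => #|I| == n)) => [|s _]; last first.
  by rewrite card_lblock_image.
apply: eq_bigr => I /eqP card_I.
have card_CI : #|~: I| = m by apply/(@addnI n); rewrite -{1}card_I cardsC card_ord.
by rewrite (set_term_expand c phi beta card_I card_CI).
Qed.
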